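(* Let $\Bbbk$ be an algebraically closed field of characteristic zero and $A$ a finite-dimensional left $H_4$-module algebra which is semisimple as a $\Bbbk$-algebra. If $e$ is a central idempotent of $A$ such that the ideal $I=Ae$ satisfies $g\triangleright I\subseteq I$, then $g\triangleright e=e$, $x\triangleright e=0$, and $I$ is an $H_4$-submodule of $A$; in particular $I$ is itself an $H_4$-module algebra.
   Context: $H_4$ is Sweedler's $4$-dimensional Hopf algebra generated by $g,x$ with $g^2=1$, $x^2=0$, $gx=-xg$, $\Delta(g)=g\otimes g$, $\Delta(x)=x\otimes g+1\otimes x$, $\epsilon(g)=1$, $\epsilon(x)=0$. A left $H_4$-module algebra is an algebra $A$ with a left $H_4$-action $\triangleright$ satisfying $h\triangleright(ab)=(h_1\triangleright a)(h_2\triangleright b)$ and $h\triangleright 1=\epsilon(h)1$; thus $g$ acts by an algebra automorphism and $x\triangleright(ab)=(x\triangleright a)(g\triangleright b)+a(x\triangleright b)$. *)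

From HB Require Import structures.
From mathcomp Require Import all_boot all_order all_algebra all_field.
Set Implicit Arguments. Unset Strict Implicit. Unset Printing Implicit Defensive.
Import GRing.Theory.
Local Open Scope ring_scope.

Definition is_left_ideal (K : fieldType) (A : falgType K) (L : {vspace A}) :=
  forall a v : A, v \in L -> a * v \in L.

(* A is semisimple: A is semisimple as a left module over itself, i.e.
   every left ideal has a complementary left ideal (direct sum = A). *)
Definition semisimple_algebra (K : fieldType) (A : falgType K) :=
  forall L : {vspace A}, is_left_ideal L ->
    exists L' : {vspace A},
      [/\ is_left_ideal L', (L + L')%VS = fullv & (L :&: L')%VS = 0%VS].

(* A left H_4-module algebra structure on A, given by the actions
   gact (of g) and xact (of x) of the generators of Sweedler's algebra H_4:
   both are K-linear, satisfy the defining relations g^2 = 1, x^2 = 0,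
   gx = -xg, and the module-algebra compatibilities
   g(ab) = g(a)g(b), x(ab) = x(a)g(b) + a x(b), g 1 = 1, x 1 = 0. *)
Definition H4_module_algebra (K : fieldType) (A : falgType K)
    (gact xact : A -> A) :=
  [/\ linear gact, linear xact,
      [/\ forall a, gact (gact a) = a,
          forall a, xact (xact a) = 0 &
          forall a, gact (xact a) = - xact (gact a)] &
      [/\ forall a b, gact (a * b) = gact a * gact b,
          forall a b, xact (a * b) = xact a * gact b + a * xact b,
          gact 1 = 1 & xact 1 = 0]].

Definition central_idempotent (K : fieldType) (A : falgType K) (e : A) :=
  e * e = e /\ forall a : A, a * e = e * a.

Definition in_Ae (K : fieldType) (A : falgType K) (e y : A) :=
  exists a : A, y = a * e.

From HB Require Import structures.
From mathcomp Require Import all_boot all_order all_algebra all_field.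
Set Implicit Arguments. Unset Strict Implicit.
Import GRing.Theory.
Local Open Scope ring_scope.

(* An involutive multiplicative map g with g e in A e sends e to a central
   idempotent dividing e, and applying g again shows that e divides g e, so
   g e = e.  The twisted Leibniz rule for x then reads x e = x(e) e + e x(e),
   which forces x e = 0 for a central idempotent. *)

Section CentralIdempotent.

Variables (R : pzRingType) (e : R).
Hypotheses (idem_e : e * e = e) (central_e : forall a : R, a * e = e * a).

Lemma involutive_multiplicative_fix_central_idempotent (g : R -> R) (c : R) :
    involutive g -> {morph g : a b / a * b} -> g e = c * e -> g e = e.
Proof.
move=> gK gM gec.
have ge_e : g e * e = g e by rewrite gec -mulrA idem_e.
have e_ge : e * g e = e by have := congr1 g ge_e; rewrite gM !gK.
by rewrite -ge_e central_e e_ge.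
Qed.

Lemma central_idempotent_leibniz_eq0 (d : R -> R) :
  d e = d e * e + e * d e -> d e = 0.
Proof.
move=> de.
have e_de0 : e * d e = 0.
  have twice : e * d e = e * d e + e * d e.
    by rewrite {1}de mulrDr !mulrA idem_e central_e mulrA idem_e.
  by apply: (@addrI _ (e * d e)); rewrite addr0 -twice.
by rewrite de central_e e_de0 addr0.
Qed.

End CentralIdempotent.

Theorem lemma3p4 (K : closedFieldType) (hK : [pchar K] =i pred0)
    (A : falgType K) (gact xact : A -> A)
    (hH : H4_module_algebra gact xact) (hss : semisimple_algebra A)
    (e : A) (he : central_idempotent e)
    (hgI : forall y : A, in_Ae e y -> in_Ae e (gact y)) :
  [/\ gact e = e, xact e = 0 &
      forall y : A, in_Ae e y -> in_Ae e (gact y) /\ in_Ae e (xact y)].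
Proof.
case: he => idem_e central_e.
case: hH => _ _ [gK _ _] [gM xM _ _].
have [c gec] : in_Ae e (gact e) by apply: hgI; exists 1; rewrite mul1r.
have ge := involutive_multiplicative_fix_central_idempotent idem_e central_e gK gM gec.
have xe : xact e = 0.
  by apply: central_idempotent_leibniz_eq0 => //; rewrite -{1}idem_e xM ge.
split => // _ [a ->]; split.
- by exists (gact a); rewrite gM ge.
- by exists (xact a); rewrite xM ge xe mulr0 addr0.
Qed.
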